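(* Let $m$ and $k$ be positive integers with $m\le k-2$. Let $G$ be an inflator graph of order $k$ with drop $m$ and distinguished vertex set $\{a,b\}$. Let $H$ be the graph obtained from $G$ by adding a new vertex $x$ and the two edges $ax$ and $bx$. Then $H$ is nonhamiltonian and homogeneously traceable.
   Context: All graphs are finite and simple; the order of a path is its number of vertices. For vertices $u,v$ of $G$, $\tau_G(u,v)$ is the order of a longest path in $G$ with endvertices $u$ and $v$. Let $G$ be a graph of order $k\ge 3$ and $m\le k-2$ a positive integer. $G$ is an inflator graph with drop $m$ if it has two distinguished vertices $a,b$ such that: (D-1) $\tau_G(a,b)=k-m$; (D-2) each distinguished vertex is an endvertex of a path in $G$ containing all vertices of $G$ except the other distinguished vertex; (D-3) $G$ has a hamiltonian path starting at each distinguished vertex; (D-4) for every $v\in V(G)\setminus\{a,b\}$ there are a path $P$ from $v$ to one distinguished vertex and a path $Q$ having the other distinguished vertex as an endvertex (possibly $Q$ is that single vertex) such that $V(P)\cap V(Q)=\emptyset$ and $V(P)\cup V(Q)=V(G)$. A graph is homogeneously traceable if every vertex is an endvertex of a hamiltonian path; it is nonhamiltonian if it has no hamiltonian cycle. *)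

From mathcomp Require Import all_boot.
Set Implicit Arguments. Unset Strict Implicit. Unset Printing Implicit Defensive.

(* A path is a nonempty duplicate-free sequence of
   vertices, consecutive ones adjacent; its order is its size. *)
Section Graphs.
Variable T : finType.
Variable e : rel T.

Definition simple_graph := symmetric e /\ irreflexive e.

Definition gpath (p : seq T) : bool :=
  if p is x :: s then path e x s && uniq p else false.

Definition gpath_between (p : seq T) (u v : T) : Prop :=
  gpath p /\ head u p = u /\ last u p = v.

Definition endvertex (u : T) (p : seq T) : bool :=
  (head u p == u) || (last u p == u).

Definition tau_is (u v : T) (n : nat) : Prop :=
  (exists p, gpath_between p u v /\ size p = n) /\
  (forall p, gpath_between p u v -> size p <= n).

Definition hamiltonian_path (p : seq T) : Prop :=
  gpath p /\ forall z, z \in p.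

Definition hamiltonian_cycle (p : seq T) : Prop :=
  [/\ uniq p, cycle e p, 3 <= size p & forall z, z \in p].

Definition hamiltonian : Prop := exists p, hamiltonian_cycle p.

Definition homogeneously_traceable : Prop :=
  forall v, exists p, hamiltonian_path p /\ endvertex v p.

Definition inflator_D4_side (v a b : T) : Prop :=
  exists P Q, [/\ gpath_between P v a, gpath Q, endvertex b Q,
    [disjoint P & Q] & forall z, (z \in P) || (z \in Q)].

Definition inflator (m : nat) (a b : T) : Prop :=
  [/\ a != b,
      (* D-1 *) tau_is a b (#|T| - m),
      (* D-2 *) (exists p, [/\ gpath p, endvertex a p &
                    forall z, (z \in p) = (z != b)]) /\
                (exists p, [/\ gpath p, endvertex b p &
                    forall z, (z \in p) = (z != a)]),
      (* D-3 *) (exists p, hamiltonian_path p /\ endvertex a p) /\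
                (exists p, hamiltonian_path p /\ endvertex b p) &
      (* D-4 *) forall v, v != a -> v != b ->
                  inflator_D4_side v a b \/ inflator_D4_side v b a].

End Graphs.

(* The graph obtained by adding a new vertex x (= None) adjacent to a and b. *)
Definition add_vertex_ab (T : finType) (e : rel T) (a b : T) : rel (option T) :=
  fun u v => match u, v with
  | Some u, Some v => e u v
  | None, Some w | Some w, None => (w == a) || (w == b)
  | None, None => false
  end.

From mathcomp Require Import all_boot.
Set Implicit Arguments. Unset Strict Implicit. Unset Printing Implicit Defensive.

(* A hamiltonian cycle of H enters and leaves the new vertex x through a and b,
   so deleting x leaves a hamiltonian a-b path of G, of order k > k - m =
   tau_G(a, b).  A hamiltonian path of H from x is x followed by the
   hamiltonian path of G from a (D-3); one from a vertex v of G is obtained by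
   splicing x between the two paths given by D-4, or by D-2 (taking P = [v])
   when v is distinguished. *)

Lemma rev_cons_last (T : Type) (x : T) s :
  rev (x :: s) = last x s :: rev (belast x s).
Proof. by rewrite lastI rev_rcons. Qed.

Lemma notin_None_map_Some (T : eqType) (s : seq (option T)) :
  None \notin s -> s = map Some (pmap id s).
Proof. by elim: s => [|[y|] s IH] //=; rewrite in_cons => /IH <-. Qed.

Lemma None_notin_map_Some (T : eqType) (s : seq T) : None \notin map Some s.
Proof. by apply/mapP => -[]. Qed.

Section PathsInSymmetricGraphs.
Variables (T : finType) (e : rel T).
Hypothesis sym_e : symmetric e.

Lemma gpath_cons x s : gpath e (x :: s) = path e x s && uniq (x :: s).
Proof. by []. Qed.

Lemma gpath_rev p : gpath e (rev p) = gpath e p.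
Proof.
case: p => [|x s] //; rewrite rev_cons_last gpath_cons -rev_cons_last rev_uniq.
by rewrite rev_path (@eq_path _ _ e) // => y z; rewrite sym_e.
Qed.

Lemma gpath_from_endvertex u p : gpath e p -> endvertex u p ->
  exists s, gpath e (u :: s) /\ u :: s =i p.
Proof.
case: p => [|x s] // gp; rewrite [endvertex _ _]/= => /orP[/eqP <-|/eqP <-].
  by exists s.
exists (rev (belast x s)); rewrite -(rev_cons_last x s) gpath_rev.
by split=> // z; rewrite mem_rev.
Qed.

Lemma size_gpath_le_tau a b n x s : tau_is e a b n -> gpath e (x :: s) ->
  x != last x s -> (x == a) || (x == b) -> (last x s == a) || (last x s == b) ->
  size (x :: s) <= n.
Proof.
move=> [_ tau_max] gp xl xab lab.
have [/andP[/eqP xa /eqP lb]|/andP[/eqP xb /eqP la]] :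
    (x == a) && (last x s == b) \/ (x == b) && (last x s == a).
  by case/orP: xab lab xl => /eqP-> /orP[]/eqP->; rewrite !eqxx => // _;
    [left | right].
- by apply: tau_max; split; last by rewrite /= lb.
- rewrite -size_rev; apply: tau_max; rewrite /gpath_between gpath_rev.
  by split=> //; rewrite {1}rev_cons_last rev_cons last_rcons la xb.
Qed.

End PathsInSymmetricGraphs.

Section AddVertex.
Variables (T : finType) (e : rel T) (a b : T).
Local Notation H := (add_vertex_ab e a b).

Lemma path_add_vertex_Some x s : path H (Some x) (map Some s) = path e x s.
Proof. by elim: s x => //= y s IH x; rewrite IH. Qed.

Lemma perm_add_vertex (P Q : seq T) :
  perm_eq (map Some P ++ None :: map Some Q) (None :: map Some (P ++ Q)).
Proof. by rewrite -cat1s perm_catCA map_cat. Qed.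

Lemma uniq_add_vertex (P Q : seq T) :
  uniq (map Some P ++ None :: map Some Q) = uniq (P ++ Q).
Proof.
rewrite (perm_uniq (perm_add_vertex P Q)) /= None_notin_map_Some.
by rewrite (map_inj_uniq Some_inj).
Qed.

Lemma mem_add_vertex (P Q : seq T) z :
  (Some z \in map Some P ++ None :: map Some Q) = (z \in P ++ Q).
Proof.
by rewrite (perm_mem (perm_add_vertex P Q)) in_cons mem_map //; exact: Some_inj.
Qed.

Lemma hamiltonian_path_through_new_vertex v s w t :
  gpath e (v :: s) -> gpath e (w :: t) -> [disjoint v :: s & w :: t] ->
  (forall z, (z \in v :: s) || (z \in w :: t)) ->
  (last v s == a) || (last v s == b) -> (w == a) || (w == b) ->
  hamiltonian_path H (map Some (v :: s) ++ None :: map Some (w :: t)).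
Proof.
move=> /andP[ps us] /andP[pt ut] dst covers vab wab; split.
  rewrite map_cons cat_cons gpath_cons -cat_cons -map_cons uniq_add_vertex.
  rewrite cat_uniq us ut andbT -disjoint_has disjoint_sym dst cat_path.
  rewrite path_add_vertex_Some ps last_map /= vab wab.
  by rewrite path_add_vertex_Some pt.
by case=> [z|]; rewrite ?mem_add_vertex mem_cat ?covers ?mem_head ?orbT.
Qed.

Lemma hamiltonian_path_from_new_vertex w t :
  hamiltonian_path e (w :: t) -> (w == a) || (w == b) ->
  hamiltonian_path H (None :: map Some (w :: t)).
Proof.
move=> [/andP[pt ut] covers] wab; split.
  rewrite gpath_cons cons_uniq None_notin_map_Some (map_inj_uniq Some_inj) ut.
  by rewrite /= wab path_add_vertex_Some pt.
by case=> [z|]; rewrite in_cons // mem_map ?covers //; exact: Some_inj.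
Qed.

Lemma hamiltonian_cycle_add_vertex c : hamiltonian_cycle H c ->
  exists x s, [/\ gpath e (x :: s), size (x :: s) = #|T|,
    (x == a) || (x == b) & (last x s == a) || (last x s == b)].
Proof.
case=> uc cc _ in_c; have Nc := in_c None.
move: uc cc in_c; case/splitPr: Nc => c1 c2.
rewrite -(rot_uniq (size c1)) -(rot_cycle (size c1)) rot_size_cat.
rewrite cat_cons cons_uniq.
case/andP=> Nd ud cd in_c; have dE := notin_None_map_Some Nd.
have in_t z : Some z \in map Some (pmap id (c2 ++ c1)).
  by move: (in_c (Some z)); rewrite -(mem_rot (size c1)) rot_size_cat /= -dE.
rewrite {}dE in ud cd; case: (pmap id _) ud cd in_t => [|x s] // ud cd in_t.
rewrite /= rcons_path path_add_vertex_Some last_map /= in cd.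
case/and3P: cd => xab ps lab.
have us : uniq (x :: s) by rewrite -(map_inj_uniq Some_inj).
exists x, s; split=> //; first by rewrite gpath_cons ps.
rewrite -(card_uniqP us) cardT; apply: eq_cardT => z.
by rewrite -(mem_map Some_inj) in_t.
Qed.

Hypothesis sym_e : symmetric e.

Lemma add_vertex_traceable_from_split v u w P Q :
  (u == a) || (u == b) -> (w == a) || (w == b) ->
  gpath_between e P v u -> gpath e Q -> endvertex w Q ->
  [disjoint P & Q] -> (forall z, (z \in P) || (z \in Q)) ->
  exists p, hamiltonian_path H p /\ endvertex (Some v) p.
Proof.
move=> uab wab [gP [hP lP]] gQ wQ dPQ covers.
have [t [gt Qt]] := gpath_from_endvertex sym_e gQ wQ.
case: P gP hP lP dPQ covers => [|x s] // gP /= xv; subst x => lP dPQ covers.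
exists (map Some (v :: s) ++ None :: map Some (w :: t)).
split; last by rewrite /endvertex /= eqxx.
apply: hamiltonian_path_through_new_vertex; rewrite ?lP //.
  by rewrite (eq_disjoint_r Qt).
by move=> z; rewrite Qt.
Qed.

Lemma add_vertex_traceable_from_almost_spanning u w Q :
  (u == a) || (u == b) -> (w == a) || (w == b) ->
  gpath e Q -> endvertex w Q -> (forall z, (z \in Q) = (z != u)) ->
  exists p, hamiltonian_path H p /\ endvertex (Some u) p.
Proof.
move=> uab wab gQ wQ Qu.
apply: (@add_vertex_traceable_from_split u u w [:: u] Q uab wab _ gQ wQ)
  => [||z].
- by [].
- by rewrite disjoint_has /= Qu eqxx.
- by rewrite Qu mem_seq1 orbN.
Qed.

Lemma add_vertex_nonhamiltonian n :
  1 < #|T| -> n < #|T| -> tau_is e a b n -> ~ hamiltonian H.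
Proof.
move=> T_gt1 n_lt tau [c /hamiltonian_cycle_add_vertex [x [s [gp sz xab lab]]]].
have xl : x != last x s.
  case: s sz gp {xab lab} => [|y s] sz; first by rewrite -sz in T_gt1.
  rewrite gpath_cons cons_uniq => /and3P[_ xs _].
  by apply: contraNneq xs => /= ->; exact: mem_last.
by have := size_gpath_le_tau sym_e tau gp xl xab lab; rewrite sz leqNgt n_lt.
Qed.

Lemma add_vertex_homogeneously_traceable m :
  inflator e m a b -> homogeneously_traceable H.
Proof.
case=> _ _ [[pa [ga ea ca]] [pb [gb eb cb]]] [[p [[gp ham] ep]] _] D4.
have aab : (a == a) || (a == b) by rewrite eqxx.
have bab : (b == a) || (b == b) by rewrite eqxx orbT.
case=> [v|].
- case: (eqVneq v a) => [->|va].
    exact: add_vertex_traceable_from_almost_spanning aab bab gb eb cb.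
  case: (eqVneq v b) => [->|vb].
    exact: add_vertex_traceable_from_almost_spanning bab aab ga ea ca.
  case: (D4 v va vb) => -[P [Q [gP gQ eQ dPQ cPQ]]].
    exact: add_vertex_traceable_from_split aab bab gP gQ eQ dPQ cPQ.
  exact: add_vertex_traceable_from_split bab aab gP gQ eQ dPQ cPQ.
- have [t [gt pt]] := gpath_from_endvertex sym_e gp ep.
  exists (None :: map Some (a :: t)); split; last by [].
  by apply: hamiltonian_path_from_new_vertex aab; split=> // z; rewrite pt.
Qed.

End AddVertex.

Theorem theorem2p22 (T : finType) (e : rel T) (m k : nat) (a b : T) :
  simple_graph e -> #|T| = k -> 3 <= k -> 0 < m -> m <= k - 2 ->
  inflator e m a b ->
  ~ hamiltonian (add_vertex_ab e a b) /\
  homogeneously_traceable (add_vertex_ab e a b).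
Proof.
move=> [sym_e _] <- T_ge3 m_gt0 _ G; have [_ tau _ _ _] := G.
split; last exact: add_vertex_homogeneously_traceable G.
have drop_lt : #|T| - m < #|T| by rewrite ltn_subrL m_gt0 (leq_trans _ T_ge3).
exact (add_vertex_nonhamiltonian sym_e (ltnW T_ge3) drop_lt tau).
Qed.
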